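(* Let $S$ be a set of $k$ vertices carrying a $d$-regular bipartite graph with adjacency matrix $A|_{S\times S}$, where $d=\gamma pk$, $\gamma\ge1/2$ and $p\ge5\left(\frac{\log k}{\gamma^4k}\right)^{1/6}$. Let $\tau\ge d/2$, let $\mathbf v^{(1)},\dots,\mathbf v^{(L)}$ ($L=L_{-\tau}\ge1$) be orthonormal eigenvectors of $A|_{S\times S}$ spanning the eigenspaces with eigenvalue $\le-\tau$, and let $\mathbf w^{(i)}$, $i\in S$, be the spectral embedding vectors. Let $N\subseteq S$ be a random subset containing each $i\in S$ independently with probability $p$ (e.g. $N=N(j)\cap S$ for fixed $j\in V\setminus S$). Then for an arbitrary unit vector $\mathbf y\in\mathbb R^L$, with probability at least $1-O(1/k^4)$, $$\sum_{i\in N}\langle\mathbf y,\mathbf w^{(i)}\rangle^2\ge \frac p2.$$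
   Context: Spectral embedding: let $W$ be the $L\times k$ matrix whose rows are $\mathbf v^{(1)},\dots,\mathbf v^{(L)}$ (indexed by $S$); for $i\in S$, $\mathbf w^{(i)}\in\mathbb R^L$ is the $i$-th column of $W$, i.e. $w^{(i)}_r=v^{(r)}_i$. *)

From HB Require Import structures.
From mathcomp Require Import all_boot all_order all_algebra.
From mathcomp Require Import reals exp.
Set Implicit Arguments. Unset Strict Implicit. Unset Printing Implicit Defensive.
Import Order.TTheory GRing.Theory Num.Theory.
Local Open Scope ring_scope.

Definition simple_graph (k : nat) (e : rel 'I_k) : Prop :=
  (forall i, ~~ e i i) /\ (forall i j, e i j = e j i).

Definition bipartite (k : nat) (e : rel 'I_k) : Prop :=
  exists side : 'I_k -> bool, forall i j, e i j -> side i != side j.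

Definition regular (k : nat) (e : rel 'I_k) (d : nat) : Prop :=
  forall i, #|[set j | e i j]| = d.

Definition adjmx (R : pzRingType) (k : nat) (e : rel 'I_k) : 'M[R]_k :=
  \matrix_(i, j) (e i j)%:R.

(* V : 'M_(L,k) has rows v^(1),...,v^(L): orthonormal eigenvectors of A
   spanning (the sum of) the eigenspaces of A with eigenvalue <= -tau. *)
Definition neg_spectral_basis (R : realFieldType) (k L : nat)
    (A : 'M[R]_k) (tau : R) (V : 'M[R]_(L, k)) : Prop :=
  [/\ V *m V^T = 1%:M,
      (forall r : 'I_L, exists2 lam : R, lam <= - tau &
          row r V *m A = lam *: row r V)
    & (forall (x : 'rV[R]_k) (lam : R), lam <= - tau ->
          x *m A = lam *: x -> (x <= V)%MS)].

(* Spectral embedding: w^(i) is the i-th column of V; inner product <y, w^(i)>. *)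
Definition wdot (R : pzRingType) (k L : nat) (V : 'M[R]_(L, k))
    (y : 'rV[R]_L) (i : 'I_k) : R :=
  \sum_(r < L) y 0 r * V r i.

(* Probability of an event E for the random subset N of 'I_k which contains
   each element independently with probability p. *)
Definition subset_prob (R : pzRingType) (k : nat) (p : R)
    (E : pred {set 'I_k}) : R :=
  \sum_(N : {set 'I_k} | E N) p ^+ #|N| * (1 - p) ^+ (k - #|N|).

From mathcomp Require Import all_boot all_order all_algebra.
From mathcomp Require Import reals exp.
From mathcomp Require Import sequences ring lra.
Set Implicit Arguments. Unset Strict Implicit. Unset Printing Implicit Defensive.
Import Order.TTheory GRing.Theory Num.Theory.
Local Open Scope ring_scope.

(* Write A for the adjacency matrix and lam_r <= -tau <= -d/2 for the eigenvalue
   of the r-th row of V.  Since v^(r) = (v^(r) A) / lam_r, every coordinate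
   <y, w^(i)> is a sum over the d neighbours j of i of the coordinates of
   z := sum_r (y_r / lam_r) v^(r), a vector of norm at most 2/d; by
   Cauchy-Schwarz <y, w^(i)>^2 <= 4/d.  The numbers <y, w^(i)>^2 therefore sum
   to 1 with each at most 4/d, and a Chernoff bound for the lower tail of their
   sum over the random set N gives failure probability at most exp(-p d/48),
   which the lower bound on p makes smaller than k^-4. *)

Lemma sum_subset_weight_prod (R : comNzRingType) (k : nat) (p : R) (f : 'I_k -> R) :
  \sum_(N : {set 'I_k}) p ^+ #|N| * (1 - p) ^+ (k - #|N|) * \prod_(i in N) f i
  = \prod_i (1 - p + p * f i).
Proof.
under [RHS]eq_bigr do rewrite addrC.
rewrite bigA_distr; apply: eq_bigr => N _.
rewrite [RHS](bigID (mem N)) /=.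
rewrite [in RHS](eq_bigr (fun i => p * f i)); last by move=> i ->.
rewrite [in RHS](eq_bigr (fun _ => 1 - p) (P := fun i => i \notin N)); last first.
  by move=> i /negbTE ->.
rewrite big_split /= prodr_const.
have -> : \prod_(i | i \notin N) (1 - p) = (1 - p) ^+ (k - #|N|).
  rewrite (eq_bigl (fun i => i \in ~: N)); last by move=> i; rewrite in_setC.
  by rewrite prodr_const cardsCs card_ord setCK.
by rewrite mulrAC -!mulrA [_ * (1 - p) ^+ _]mulrC.
Qed.

Lemma subset_probT (R : comNzRingType) (k : nat) (p : R) :
  subset_prob p (@predT {set 'I_k}) = 1.
Proof.
rewrite /subset_prob (eq_bigr (fun N : {set 'I_k} => p ^+ #|N| * (1 - p) ^+ (k - #|N|) *
  \prod_(i in N) 1)); last by move=> N _; rewrite big1_eq mulr1.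
by rewrite sum_subset_weight_prod; apply: big1 => i _; rewrite mulr1 subrK.
Qed.

Lemma subset_probC (R : comNzRingType) (k : nat) (p : R) (E : pred {set 'I_k}) :
  subset_prob p E = 1 - subset_prob p (predC E).
Proof.
by rewrite -(subset_probT k p) /subset_prob [X in _ = X - _](bigID E) /= addrK.
Qed.

Section LowerTail.
Variable R : realType.

Lemma expRN_le_linear (x : R) : 0 <= x -> x <= 3^-1 -> expR (- x) <= 1 - 3 / 4 * x.
Proof.
move=> x0 x1; have h : 1 <= (1 - 3 / 4 * x) * (1 + x) by nra.
rewrite expRN -[_^-1]mul1r ler_pdivrMr ?expR_gt0 //.
by apply: (le_trans h); apply: ler_wpM2l; [lra | exact: expR_ge1Dx].
Qed.

Lemma mgf_bernoulli_le (p u : R) : 0 <= p <= 1 -> 0 <= u -> u <= 3^-1 ->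
  1 - p + p * expR (- u) <= expR (- (3 / 4 * p * u)).
Proof.
move=> /andP[p0 p1] u0 u1; have := expRN_le_linear u0 u1.
have := expR_ge1Dx (- (3 / 4 * p * u)); nra.
Qed.

Lemma subset_prob_sum_lt_le (k : nat) (p t a : R) (X : 'I_k -> R) :
  0 <= p <= 1 -> 0 <= t ->
  subset_prob p (fun N => \sum_(i in N) X i < a)
  <= expR (t * a) * \prod_i (1 - p + p * expR (- (t * X i))).
Proof.
move=> /andP[p0 p1] t0.
rewrite -sum_subset_weight_prod mulr_sumr /subset_prob big_mkcond /=.
apply: ler_sum => N _; rewrite mulrCA.
have w0 : 0 <= p ^+ #|N| * (1 - p) ^+ (k - #|N|).
  by apply: mulr_ge0; apply: exprn_ge0; lra.
have mgf0 : 0 <= expR (t * a) * \prod_(i in N) expR (- (t * X i)).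
  by apply: mulr_ge0; [exact: expR_ge0 | apply: prodr_ge0 => i _; exact: expR_ge0].
case: ifP => [sumN | _]; last exact: mulr_ge0.
apply: ler_peMr => //.
rewrite -expR_sum -expRD sumrN -mulr_sumr -mulrBr.
apply: le_trans (expR_ge1Dx _); rewrite lerDl; apply: mulr_ge0 => //; lra.
Qed.

Lemma subset_prob_sum_lt_half (k : nat) (p M : R) (X : 'I_k -> R) :
  0 <= p <= 1 -> 0 < M -> (forall i, 0 <= X i <= M) -> \sum_i X i = 1 ->
  subset_prob p (fun N => \sum_(i in N) X i < p / 2) <= expR (- (p / (12 * M))).
Proof.
move=> p01 M0 X0M X1; set t := (3 * M)^-1.
have t0 : 0 < t by rewrite invr_gt0; lra.
apply: le_trans (subset_prob_sum_lt_le _ _ p01 (ltW t0)) _.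
have tX i : 0 <= t * X i <= 3^-1.
  have /andP[Xi0 XiM] := X0M i; rewrite mulr_ge0 ?(ltW t0) //=.
  by rewrite /t invfM -mulrA ler_piMr ?invr_ge0 // mulrC ler_pdivrMr // mul1r.
apply: (le_trans (y := expR (t * (p / 2)) * \prod_i expR (- (3 / 4 * p * (t * X i))))).
  apply: ler_wpM2l; first exact: expR_ge0.
  apply: ler_prod => i _; have /andP[tX0 tX1] := tX i.
  have /andP[p0 p1] := p01.
  rewrite mgf_bernoulli_le // andbT addr_ge0 ?subr_ge0 // mulr_ge0 //.
  exact: expR_ge0.
rewrite -expR_sum -expRD sumrN -mulr_sumr -mulr_sumr X1 mulr1 ler_expR /t !invfM.
have Mi : 0 < M^-1 by rewrite invr_gt0.
nra.
Qed.

Lemma subset_prob_sum_ge_half (k : nat) (p M : R) (X : 'I_k -> R) :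
  0 <= p <= 1 -> 0 < M -> (forall i, 0 <= X i <= M) -> \sum_i X i = 1 ->
  1 - expR (- (p / (12 * M))) <= subset_prob p (fun N => p / 2 <= \sum_(i in N) X i).
Proof.
move=> p01 M0 X0M X1; rewrite subset_probC lerD2l lerN2.
apply: le_trans (subset_prob_sum_lt_half p01 M0 X0M X1).
by rewrite le_eqVlt; apply/orP; left; apply/eqP/eq_bigl => N; rewrite /= ltNge.
Qed.

End LowerTail.

Section OrthonormalRows.
Variables (R : comNzRingType) (k L : nat) (V : 'M[R]_(L, k)).
Hypothesis V_orthonormal : V *m V^T = 1%:M.

Lemma orthonormal_rows_dot (r s : 'I_L) : \sum_j V r j * V s j = (r == s)%:R.
Proof.
have := congr1 (fun M : 'M[R]_L => M r s) V_orthonormal; rewrite !mxE => <-.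
by apply: eq_bigr => j _; rewrite mxE.
Qed.

Lemma orthonormal_rows_sqr_norm (a : 'I_L -> R) :
  \sum_j (\sum_r a r * V r j) ^+ 2 = \sum_r a r ^+ 2.
Proof.
transitivity (\sum_j \sum_r \sum_s a r * a s * (V r j * V s j)).
  apply: eq_bigr => j _; rewrite expr2 mulr_suml; apply: eq_bigr => r _.
  by rewrite mulr_sumr; apply: eq_bigr => s _; ring.
rewrite exchange_big; apply: eq_bigr => r _; rewrite exchange_big /=.
under eq_bigr do rewrite -mulr_sumr.
rewrite (bigD1 r) //= orthonormal_rows_dot eqxx mulr1 expr2.
rewrite big1 ?addr0 // => s; rewrite eq_sym orthonormal_rows_dot => /negbTE ->.
exact: mulr0.
Qed.

Lemma wdot_sqr_sum (y : 'rV[R]_L) : \sum_i wdot V y i ^+ 2 = \sum_r y 0 r ^+ 2.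
Proof. exact: orthonormal_rows_sqr_norm. Qed.

End OrthonormalRows.

Lemma orthonormal_rows_le (F : fieldType) (k L : nat) (V : 'M[F]_(L, k)) :
  V *m V^T = 1%:M -> (L <= k)%N.
Proof.
move=> V_orthonormal; rewrite -[L](mxrank1 F) -V_orthonormal.
exact: leq_trans (mxrankM_maxl _ _) (rank_leq_col _).
Qed.

Lemma sqr_sum_le_card (R : realFieldType) (I : finType) (P : pred I) (z : I -> R) :
  (\sum_(j | P j) z j) ^+ 2 <= #|P|%:R * \sum_(j | P j) z j ^+ 2.
Proof.
set S := \sum_(a | P a) \sum_(b | P b) z a ^+ 2.
have -> : #|P|%:R * \sum_(j | P j) z j ^+ 2 = S.
  by rewrite mulr_sumr; apply: eq_bigr => a _; rewrite sumr_const mulr_natl.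
have S_sym : \sum_(a | P a) \sum_(b | P b) z b ^+ 2 = S by rewrite exchange_big.
rewrite expr2 mulr_suml.
apply: (le_trans (y := \sum_(a | P a) \sum_(b | P b) (z a ^+ 2 + z b ^+ 2) / 2)).
  apply: ler_sum => a _; rewrite mulr_sumr; apply: ler_sum => b _.
  have := sqr_ge0 (z a - z b); lra.
under eq_bigr do rewrite -mulr_suml big_split /=.
rewrite -mulr_suml big_split /= S_sym -/S; lra.
Qed.

Section Delocalization.
Variables (R : realFieldType) (k L : nat).

Definition rayleigh (A : 'M[R]_k) (V : 'M[R]_(L, k)) (r : 'I_L) : R :=
  \sum_j (V *m A) r j * V r j.

Lemma neg_spectral_basis_eigen (A : 'M[R]_k) (tau : R) (V : 'M[R]_(L, k)) :
  neg_spectral_basis A tau V ->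
  forall r, rayleigh A V r <= - tau /\
            forall j, (V *m A) r j = rayleigh A V r * V r j.
Proof.
case=> V_orthonormal V_eigen _ r; have [lam lam_le eq_lam] := V_eigen r.
have VAE j : (V *m A) r j = lam * V r j.
  by have := congr1 (fun M : 'rV[R]_k => M 0 j) eq_lam; rewrite -row_mul !mxE.
suff -> : rayleigh A V r = lam by [].
rewrite /rayleigh (eq_bigr (fun j => lam * (V r j * V r j))).
  by rewrite -mulr_sumr orthonormal_rows_dot // eqxx mulr1.
by move=> j _; rewrite VAE mulrA.
Qed.

Lemma adjmx_wdot (e : rel 'I_k) (lam : 'I_L -> R) (V : 'M[R]_(L, k))
    (y : 'rV[R]_L) (i : 'I_k) :
  (forall i j, e i j = e j i) -> (forall r, lam r != 0) ->
  (forall r j, (V *m adjmx R e) r j = lam r * V r j) ->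
  wdot V y i = \sum_(j | e i j) \sum_r y 0 r / lam r * V r j.
Proof.
move=> e_sym lam_neq0 VAE.
rewrite /wdot (eq_bigr (fun r => y 0 r / lam r * (V *m adjmx R e) r i)); last first.
  by move=> r _; rewrite VAE mulrA divfK.
under eq_bigr do rewrite mxE mulr_sumr.
rewrite exchange_big [RHS]big_mkcond /=; apply: eq_bigr => j _.
under eq_bigr do rewrite mxE e_sym.
case: (e i j); first by under eq_bigr do rewrite mulr1.
by apply: big1 => r _; rewrite !mulr0.
Qed.

Lemma wdot_sqr_le (e : rel 'I_k) (d : nat) (tau : R) (V : 'M[R]_(L, k))
    (y : 'rV[R]_L) (i : 'I_k) :
  (forall i j, e i j = e j i) -> regular e d -> (0 < d)%N -> d%:R / 2 <= tau ->
  neg_spectral_basis (adjmx R e) tau V -> \sum_r y 0 r ^+ 2 = 1 ->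
  wdot V y i ^+ 2 <= 4 / d%:R.
Proof.
move=> e_sym e_reg d_gt0 tau_ge V_basis y_unit.
have V_orth : V *m V^T = 1%:M by case: V_basis.
have d_pos : 0 < d%:R :> R by rewrite ltr0n.
set D := d%:R / 2 : R; set lam := rayleigh (adjmx R e) V.
have D_pos : 0 < D by rewrite /D; lra.
have lam_le r : lam r <= - D.
  have [lam_tau _] := neg_spectral_basis_eigen V_basis r.
  by rewrite (le_trans lam_tau) // lerN2.
have lam_neq0 r : lam r != 0 by apply: ltr0_neq0; have := lam_le r; lra.
set z := fun j => \sum_r y 0 r / lam r * V r j.
have z_norm : \sum_j z j ^+ 2 <= (D^-1) ^+ 2.
  rewrite orthonormal_rows_sqr_norm // -[X in _ <= X]mul1r -y_unit mulr_suml.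
  apply: ler_sum => r _; rewrite exprMn ler_wpM2l ?sqr_ge0 // !exprVn.
  have lam2_pos : 0 < lam r ^+ 2 by rewrite lt0r sqrf_eq0 lam_neq0 sqr_ge0.
  rewrite lef_pV2 ?posrE ?lam2_pos ?exprn_gt0 // -[lam r ^+ 2]sqrrN ler_sqr ?nnegrE;
    have := lam_le r; lra.
have VAE r j : (V *m adjmx R e) r j = lam r * V r j.
  exact: (neg_spectral_basis_eigen V_basis r).2.
rewrite (adjmx_wdot y i e_sym lam_neq0 VAE).
apply: le_trans (sqr_sum_le_card _ _) _.
have -> : #|(fun j => e i j)| = d by rewrite -(e_reg i) cardsE.
have -> : 4 / d%:R = d%:R * (D^-1) ^+ 2 by rewrite /D; field; rewrite gt_eqF.
rewrite ler_pM2l //; apply: le_trans z_norm.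
rewrite [X in X <= _]big_mkcond /=; apply: ler_sum => j _.
by case: (e i j); rewrite ?sqr_ge0.
Qed.

End Delocalization.

Lemma regular_le_card (k : nat) (e : rel 'I_k) (d : nat) (i : 'I_k) :
  regular e d -> (d <= k)%N.
Proof. by move=> e_reg; rewrite -(e_reg i) -[X in (_ <= X)%N]card_ord max_card. Qed.

Lemma ln_le_sqr_mul (R : realType) (k : nat) (gamma p : R) :
  (0 < k)%N -> 0 < gamma -> 0 <= p -> gamma * p <= 1 ->
  5 * powR (ln k%:R / (gamma ^+ 4 * k%:R)) 6%:R^-1 <= p ->
  5 ^+ 6 * ln k%:R <= p ^+ 2 * k%:R.
Proof.
move=> k_gt0 gamma_pos p_ge0 gp_le1 p_ge.
have k_pos : 0 < k%:R :> R by rewrite ltr0n.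
have g4_pos : 0 < gamma ^+ 4 by rewrite exprn_gt0.
set x := ln k%:R / (gamma ^+ 4 * k%:R) in p_ge *.
have x_ge0 : 0 <= x by rewrite divr_ge0 ?ln_ge0 ?ler1n // ltW ?mulr_gt0.
have x_root : powR x 6%:R^-1 ^+ 6 = x.
  by rewrite -powR_mulrn ?powR_ge0 // -powRrM mulVf ?powRr1 ?pnatr_eq0.
have x_le : 5 ^+ 6 * x <= p ^+ 6.
  by rewrite -x_root -exprMn lerXn2r // nnegrE // mulr_ge0 // powR_ge0.
have -> : 5 ^+ 6 * ln k%:R = 5 ^+ 6 * x * (gamma ^+ 4 * k%:R).
  by rewrite /x; field; rewrite !gt_eqF.
apply: (le_trans (y := p ^+ 6 * (gamma ^+ 4 * k%:R))).
  by rewrite ler_wpM2r // mulr_ge0 // ltW.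
have -> : p ^+ 6 * (gamma ^+ 4 * k%:R) = (gamma * p) ^+ 4 * (p ^+ 2 * k%:R) by ring.
apply: ler_piMl; first by rewrite mulr_ge0 ?sqr_ge0 // ltW.
by rewrite exprn_ile1 // mulr_ge0 // ltW.
Qed.

Lemma expR_neg_le_invX4 (R : realType) (k : nat) (gamma p : R) :
  (0 < k)%N -> 1 / 2 <= gamma -> 5 ^+ 6 * ln k%:R <= p ^+ 2 * k%:R ->
  expR (- (gamma * (p ^+ 2 * k%:R) / 48)) <= 1 / k%:R ^+ 4.
Proof.
move=> k_gt0 gamma_ge ln_le.
have k_pos : 0 < k%:R :> R by rewrite ltr0n.
have k4_pos : 0 < k%:R ^+ 4 :> R by rewrite exprn_gt0.
rewrite -[1 / _]lnK ?posrE ?divr_gt0 // ln_div ?posrE // ln1 sub0r lnXn //.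
rewrite ler_expR lerN2 -[ln _ *+ 4]mulr_natr.
have lnk_ge0 : 0 <= ln k%:R :> R by rewrite ln_ge0 // ler1n.
have c56 : 384 <= 5 ^+ 6 :> R by rewrite -natrX ler_nat.
have gamma_ge0 : 0 <= gamma by lra.
have := ler_wpM2l gamma_ge0 ln_le.
have : 0 <= 5 ^+ 6 * ln k%:R :> R by rewrite mulr_ge0 // exprn_ge0.
nra.
Qed.

Unset Implicit Arguments.

Theorem lemma2p12 (R : realType) :
  exists C : R,
  forall (k : nat) (e : rel 'I_k) (d : nat) (gamma p tau : R) (L : nat)
         (V : 'M[R]_(L, k)) (y : 'rV[R]_L),
    simple_graph e -> bipartite e -> regular e d ->
    d%:R = gamma * p * k%:R ->
    1 / 2 <= gamma ->
    0 <= p <= 1 ->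
    5 * powR (ln k%:R / (gamma ^+ 4 * k%:R)) (6%:R^-1) <= p ->
    d%:R / 2 <= tau ->
    (1 <= L)%N ->
    neg_spectral_basis (adjmx R e) tau V ->
    \sum_(r < L) y 0 r ^+ 2 = 1 ->
    1 - C / k%:R ^+ 4 <=
      subset_prob p (fun N => p / 2 <= \sum_(i in N) wdot V y i ^+ 2).
Proof.
exists 1 => k e d gamma p tau L V y [_ e_sym] _ e_reg d_eq gamma_ge p01 p_ge
  tau_ge L_gt0 V_basis y_unit.
have V_orth : V *m V^T = 1%:M by case: V_basis.
have k_gt0 : (0 < k)%N := leq_trans L_gt0 (orthonormal_rows_le V_orth).
have k_pos : 0 < k%:R :> R by rewrite ltr0n.
move: (p01) => /andP[+ _]; rewrite le0r => /orP[/eqP p0 | p_pos].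
  rewrite subset_probC lerD2l lerN2 p0.
  rewrite /subset_prob big_pred0 ?divr_ge0 ?exprn_ge0 ?ltW // => N /=.
  by rewrite mul0r sumr_ge0 // => i _; exact: sqr_ge0.
have gp_le1 : gamma * p <= 1.
  rewrite -(ler_pM2r k_pos) mul1r -d_eq ler_nat.
  exact: regular_le_card (Ordinal k_gt0) e_reg.
have gamma_pos : 0 < gamma by lra.
have d_pos : 0 < d%:R :> R by rewrite d_eq !mulr_gt0.
have ln_le := ln_le_sqr_mul k_gt0 gamma_pos (ltW p_pos) gp_le1 p_ge.
have w_le i : 0 <= wdot V y i ^+ 2 <= 4 / d%:R.
  by rewrite sqr_ge0 (wdot_sqr_le _ e_sym e_reg _ tau_ge V_basis) // -(ltr0n R).
apply: le_trans (subset_prob_sum_ge_half p01 _ w_le _).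
- have -> : p / (12 * (4 / d%:R)) = gamma * (p ^+ 2 * k%:R) / 48.
    by rewrite d_eq; field; rewrite !gt_eqF.
  by rewrite lerD2l lerN2 expR_neg_le_invX4.
- exact: divr_gt0.
- by rewrite wdot_sqr_sum.
Qed.
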